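(* There exist $b_1,b_2\in L^\infty_{loc}(\mathbb{R})$ such that $S_2(b_1,b_2)<\infty$ and $T_2(b_1,b_2)<\infty$, but $S_{2+\varepsilon}(b_1,b_2)=\infty$ and $T_{2+\varepsilon}(b_1,b_2)=\infty$ for every $\varepsilon>0$.
   Context: For $r>0$, with $\langle g\rangle_I=\frac1{|I|}\int_Ig$ and suprema over all intervals $I\subset\mathbb{R}$: $S_r(b_1,b_2)=\sup_I\big(\frac1{|I|}\int_I|b_1-\langle b_1\rangle_I|^r\big)^{1/r}\big(\frac1{|I|}\int_I|b_2-\langle b_2\rangle_I|^r\big)^{1/r}$ and $T_r(b_1,b_2)=\sup_I\big(\frac1{|I|}\int_I|b_1-\langle b_1\rangle_I|^r|b_2-\langle b_2\rangle_I|^r\big)^{1/r}$. *)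

From HB Require Import structures.
From mathcomp Require Import all_boot all_order all_algebra.
From mathcomp Require Import all_classical all_reals all_analysis.
Set Implicit Arguments. Unset Strict Implicit. Unset Printing Implicit Defensive.
Import Order.TTheory GRing.Theory Num.Theory.
Local Open Scope classical_set_scope.
Local Open Scope ring_scope.

Section Defs.
Variable R : realType.
Local Notation mu := (@lebesgue_measure R).

Definition Linfty_loc (b : R -> R) : Prop :=
  measurable_fun setT b /\
  forall a c : R, exists M : R,
    {ae mu, forall x, x \in `[a, c] -> `|b x| <= M}.

Definition avg (b : R -> R) (a c : R) : R :=
  (c - a)^-1 * fine (\int[mu]_(x in `[a, c]) (b x)%:E)%E.

Definition mosc (r : R) (b : R -> R) (a c : R) : \bar R :=
  ((((c - a)^-1)%:E * \int[mu]_(x in `[a, c]) ((`|b x - avg b a c| `^ r)%R)%:E) `^ r^-1)%E.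

Definition S_ (r : R) (b1 b2 : R -> R) : \bar R :=
  ereal_sup [set y | exists a c : R, a < c /\ y = (mosc r b1 a c * mosc r b2 a c)%E].

Definition T_ (r : R) (b1 b2 : R -> R) : \bar R :=
  ereal_sup [set y | exists a c : R, a < c /\ y = ((((c - a)^-1)%:E *
      \int[mu]_(x in `[a, c]) (((`|b1 x - avg b1 a c| `^ r) * (`|b2 x - avg b2 a c| `^ r))%R)%:E) `^ r^-1)%E].
End Defs.

(* The witnesses are b1 x = sqrt |x| and b2 = 1_[0,1].  On I = [a, c], b1 takes its
   values in [0, sqrt (|a| + |c|)], so its mean square oscillation is at most |a| + |c|,
   while that of b2 is at most m + m^2, where m is the proportion of I covered by [0,1].
   If m > 0 then I meets [0,1], hence (|a| + |c|) m <= 2 m + 2 |I| m <= 4, which bounds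
   the quantities of both S_2 and T_2 by sqrt 8.  On I = [0, 64 u^2] the mean of b1 is at
   least 3 u and that of b2 at most 1/2, so |b1 - <b1>| >= 2 u on [0, u^2] and
   |b2 - <b2>| >= 1/2 on [0, 1]; the quantities of S_r and T_r are then at least
   (u^(r-2) / 4096)^(1/r), which is unbounded in u when r > 2. *)

From HB Require Import structures.
From mathcomp Require Import all_boot all_order all_algebra.
From mathcomp Require Import all_classical all_reals all_analysis.
From mathcomp Require Import ring lra measurable_realfun.
Import Order.TTheory GRing.Theory Num.Theory.
Local Open Scope classical_set_scope.
Local Open Scope ring_scope.

Section real_powers.
Context {R : realType}.
Implicit Types (x y m u r K : R).

Lemma norm_subr_le x m K : 0 <= x <= K -> 0 <= m <= K -> `|x - m| <= K.
Proof. by move=> /andP[? ?] /andP[? ?]; rewrite ler_norml; apply/andP; split; lra. Qed.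

Lemma powR2_norm y : `|y| `^ 2 = y ^+ 2.
Proof. by rewrite powR_mulrn // real_normK // num_real. Qed.

Lemma powR_sub2 {u r} : 0 < u -> u `^ (r - 2) = u `^ r / u ^+ 2.
Proof.
move=> u0; rewrite powRB; last by rewrite (gt_eqF u0) implybT.
by rewrite powR_mulrn // ltW.
Qed.

Lemma powR_mul2V {u r} : 0 <= u -> (2 * u) `^ r * 2^-1 `^ r = u `^ r.
Proof. by move=> u0; rewrite -powRM ?mulr_ge0 ?invr_ge0 //; congr (_ `^ _); field. Qed.

Lemma powR_sub2_unbounded {r C : R} (M : R) : 2 < r -> 0 < C ->
  exists2 u, 1 <= u & M <= (u `^ (r - 2) / C) `^ r^-1.
Proof.
move=> r2 C0; have r0 : 0 < r by lra.
have e0 : 0 < (r - 2)^-1 by rewrite invr_gt0 subr_gt0.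
pose K := C * `|M| `^ r + 1.
have K1 : 1 <= K by rewrite lerDr mulr_ge0 ?powR_ge0 ?(ltW C0).
exists (K `^ (r - 2)^-1).
  by have := ler_powR K1 (ltW e0); rewrite powRr0.
rewrite -powRrM mulVf ?gt_eqF ?subr_gt0 // powRr1 ?(le_trans ler01) //.
apply: le_trans (ler_norm M) _.
have -> : `|M| = (`|M| `^ r) `^ r^-1 by rewrite -powRrM mulfV ?gt_eqF // powRr1.
apply: ge0_ler_powR; rewrite ?nnegrE ?invr_ge0 ?powR_ge0 ?(ltW r0) //.
  by rewrite divr_ge0 ?(ltW C0) // (le_trans ler01).
by rewrite ler_pdivlMr // /K mulrC lerDl ler01.
Qed.

End real_powers.

Section interval_average.
Context {R : realType}.
Local Notation mu := (@lebesgue_measure R).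
Implicit Types (a c p q k K : R) (f g : R -> R).

Lemma lebesgue_measure_itv_cc {a c} : a <= c -> mu `[a, c] = (c - a)%:E.
Proof.
move=> ac; rewrite lebesgue_measure_itv /= lte_fin.
by case: ltP => // ca; rewrite (@le_anti _ _ c a) ?ca ?subrr.
Qed.

Lemma integral_itv_cst {a c} k : a <= c ->
  (\int[mu]_(x in `[a, c]) k%:E = (k * (c - a))%:E)%E.
Proof.
(* [integral_cst] expresses the measure through another canonical instance of
   the Lebesgue measure, which has to be folded back to [mu]. *)
move=> ac; rewrite integral_cst // -[X in (_ * X)%E]/(mu `[a, c]).
by rewrite lebesgue_measure_itv_cc.
Qed.

Lemma integral_itv_ge a c p q k f : a <= p -> p <= q -> q <= c -> 0 <= k ->
  measurable_fun setT f ->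
  (forall x, x \in `[a, c] -> 0 <= f x) ->
  (forall x, x \in `[p, q] -> k <= f x) ->
  ((k * (q - p))%:E <= \int[mu]_(x in `[a, c]) (f x)%:E)%E.
Proof.
move=> ap pq qc k0 mf f0 fk.
have mfE : measurable_fun setT (EFin \o f) by exact/measurable_EFinP.
have sub : `[p, q] `<=` `[a, c].
  move=> x /=; rewrite !in_itv /= => /andP[px xq].
  by rewrite (le_trans ap px) (le_trans xq qc).
apply: (@le_trans _ _ (\int[mu]_(x in `[p, q]) (f x)%:E)%E); last first.
  by apply: ge0_subset_integral => //; exact: measurable_funS mfE.
rewrite -integral_itv_cst //.
by apply: ge0_le_integral => //; exact: measurable_funS mfE.
Qed.

Context {a c : R} (lt_ac : a < c).

Lemma fin_num_integral_itv {f K} : measurable_fun setT f ->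
  (forall x, x \in `[a, c] -> 0 <= f x <= K) ->
  (\int[mu]_(x in `[a, c]) (f x)%:E)%E \is a fin_num.
Proof.
move=> mf fK; rewrite ge0_fin_numE; last first.
  by apply: integral_ge0 => x /fK /andP[+ _]; rewrite lee_fin.
apply: (@le_lt_trans _ _ (K * (c - a))%:E); last exact: ltry.
rewrite -(integral_itv_cst _ (ltW lt_ac)).
apply: ge0_le_integral => //.
- by move=> x /fK /andP[+ _]; rewrite lee_fin.
- by apply/measurable_EFinP; exact: measurable_funS mf.
- by move=> x /fK /andP[_ +]; rewrite lee_fin.
Qed.

Lemma avgE {f K} : measurable_fun setT f ->
  (forall x, x \in `[a, c] -> 0 <= f x <= K) ->
  (((c - a)^-1)%:E * \int[mu]_(x in `[a, c]) (f x)%:E)%E = (avg f a c)%:E.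
Proof. by move=> mf fK; rewrite /avg EFinM fineK // (fin_num_integral_itv mf fK). Qed.

Lemma avg_cst k : avg (fun=> k) a c = k.
Proof.
by rewrite /avg (integral_itv_cst _ (ltW lt_ac)) /=; field; rewrite subr_eq0 gt_eqF.
Qed.

Lemma le_avg {f g} K : measurable_fun setT f -> measurable_fun setT g ->
  (forall x, x \in `[a, c] -> 0 <= f x <= g x) ->
  (forall x, x \in `[a, c] -> g x <= K) ->
  avg f a c <= avg g a c.
Proof.
move=> mf mg fg gK.
have gb x : x \in `[a, c] -> 0 <= g x <= K.
  by move=> xI; have /andP[f0 fgx] := fg x xI; rewrite (le_trans f0 fgx) gK.
have fb x : x \in `[a, c] -> 0 <= f x <= K.
  by move=> xI; have /andP[-> fgx] := fg x xI; rewrite (le_trans fgx) ?gK.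
rewrite -lee_fin -(avgE mf fb) -(avgE mg gb) lee_wpmul2l //.
  by rewrite lee_fin invr_ge0 subr_ge0 ltW.
apply: ge0_le_integral => //.
- by move=> x /fb /andP[+ _]; rewrite lee_fin.
- by apply/measurable_EFinP; exact: measurable_funS mf.
- by apply/measurable_EFinP; exact: measurable_funS mg.
- by move=> x /fg /andP[_ +]; rewrite lee_fin.
Qed.

Lemma avg_bound {f K} : measurable_fun setT f ->
  (forall x, x \in `[a, c] -> 0 <= f x <= K) -> 0 <= avg f a c <= K.
Proof.
move=> mf fK; have mcst k : measurable_fun setT (fun=> k : R) := measurable_cst k.
apply/andP; split; [rewrite -{1}(avg_cst 0) | rewrite -(avg_cst K)].
all: by apply: (le_avg K) => // x /fK /andP[fx0 fxK]; rewrite ?lexx ?fx0.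
Qed.

Lemma avg_affine {f K} {s t : R} : 0 <= s -> 0 <= t -> measurable_fun setT f ->
  (forall x, x \in `[a, c] -> 0 <= f x <= K) ->
  avg (fun x => s * f x + t) a c = s * avg f a c + t.
Proof.
move=> s0 t0 mf fK.
have mfE : measurable_fun `[a, c] (fun x => (f x)%:E).
  by apply/measurable_EFinP; exact: measurable_funS mf.
have f0 x : `[a, c]%classic x -> (0 <= (f x)%:E)%E.
  by move=> /= /fK /andP[+ _]; rewrite lee_fin.
have Iaff : (\int[mu]_(x in `[a, c]) ((s * f x + t)%:E) =
    (s * fine (\int[mu]_(x in `[a, c]) (f x)%:E) + t * (c - a))%:E)%E.
  under eq_integral do rewrite EFinD EFinM.
  rewrite ge0_integralD //; first last.
  - by apply: emeasurable_funM => //; exact: measurable_cst.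
  - by move=> x xI; apply: mule_ge0; [rewrite lee_fin | exact: f0].
  rewrite ge0_integralZl_EFin // (integral_itv_cst _ (ltW lt_ac)).
  by rewrite -{1}(fineK (fin_num_integral_itv mf fK)).
by rewrite /avg Iaff /=; field; rewrite subr_eq0 gt_eqF.
Qed.

Lemma avg_ge {p q k f K} : a <= p -> p <= q -> q <= c -> 0 <= k ->
  measurable_fun setT f ->
  (forall x, x \in `[a, c] -> 0 <= f x <= K) ->
  (forall x, x \in `[p, q] -> k <= f x) ->
  k * (q - p) / (c - a) <= avg f a c.
Proof.
move=> ap pq qc k0 mf fK fk; rewrite -lee_fin -(avgE mf fK) mulrC EFinM.
rewrite lee_wpmul2l ?lee_fin ?invr_ge0 ?subr_ge0 ?(ltW lt_ac) //.
by apply: integral_itv_ge => // x /fK /andP[].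
Qed.

End interval_average.

Section mean_oscillation.
Context {R : realType}.
Local Notation mu := (@lebesgue_measure R).
Implicit Types (a c k K m r : R) (b : R -> R).

Definition mosc_pow r b a c : R := avg (fun x => `|b x - avg b a c| `^ r) a c.

Definition mosc_prod_pow r (b1 b2 : R -> R) a c : R :=
  avg (fun x => `|b1 x - avg b1 a c| `^ r * `|b2 x - avg b2 a c| `^ r) a c.

Lemma measurable_osc {r b m} : measurable_fun setT b ->
  measurable_fun setT (fun x => `|b x - m| `^ r).
Proof.
move=> mb; apply: (measurableT_comp (measurable_powR r)).
apply: (measurableT_comp (@normr_measurable R setT)).
exact: measurable_funB mb (measurable_cst m).
Qed.

Context {a c : R} (lt_ac : a < c).

Lemma osc_bound {r b K} : 0 <= r -> measurable_fun setT b ->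
  (forall x, x \in `[a, c] -> 0 <= b x <= K) ->
  forall x, x \in `[a, c] -> 0 <= `|b x - avg b a c| `^ r <= K `^ r.
Proof.
move=> r0 mb bK x /bK bx; have /andP[m0 mK] := avg_bound lt_ac mb bK.
have K0 : 0 <= K by case/andP: bx; exact: le_trans.
by rewrite powR_ge0 ge0_ler_powR ?nnegrE ?norm_subr_le ?m0.
Qed.

Lemma moscE {r b K} : 0 <= r -> measurable_fun setT b ->
  (forall x, x \in `[a, c] -> 0 <= b x <= K) ->
  mosc r b a c = (mosc_pow r b a c `^ r^-1)%:E.
Proof.
move=> r0 mb bK.
by rewrite /mosc (avgE lt_ac (measurable_osc mb) (osc_bound r0 mb bK)) poweR_EFin.
Qed.

Lemma mosc_pow_bound {r b K} : 0 <= r -> measurable_fun setT b ->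
  (forall x, x \in `[a, c] -> 0 <= b x <= K) -> 0 <= mosc_pow r b a c <= K `^ r.
Proof.
by move=> r0 mb bK; exact: (avg_bound lt_ac (measurable_osc mb) (osc_bound r0 mb bK)).
Qed.

Lemma mosc_pow_ge {p q k r b K} : a <= p -> p <= q -> q <= c -> 0 <= k -> 0 <= r ->
  measurable_fun setT b -> (forall x, x \in `[a, c] -> 0 <= b x <= K) ->
  (forall x, x \in `[p, q] -> k <= `|b x - avg b a c|) ->
  k `^ r * (q - p) / (c - a) <= mosc_pow r b a c.
Proof.
move=> ap pq qc k0 r0 mb bK bk.
apply: (avg_ge lt_ac ap pq qc (powR_ge0 _ _) (measurable_osc mb) (osc_bound r0 mb bK)).
by move=> x /bk kx; rewrite ge0_ler_powR ?nnegrE // (le_trans k0).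
Qed.

Lemma osc_prod_bound {r b1 b2 K1 K2} : 0 <= r ->
  measurable_fun setT b1 -> measurable_fun setT b2 ->
  (forall x, x \in `[a, c] -> 0 <= b1 x <= K1) ->
  (forall x, x \in `[a, c] -> 0 <= b2 x <= K2) ->
  forall x, x \in `[a, c] ->
    0 <= `|b1 x - avg b1 a c| `^ r * `|b2 x - avg b2 a c| `^ r <= K1 `^ r * K2 `^ r.
Proof.
move=> r0 mb1 mb2 b1K b2K x xI.
have /andP[p0 pK] := osc_bound r0 mb1 b1K x xI.
have /andP[q0 qK] := osc_bound r0 mb2 b2K x xI.
by rewrite (mulr_ge0 p0 q0) (ler_pM p0 q0 pK qK).
Qed.

Lemma mosc_prod_pow_bound {r b1 b2 K1 K2} : 0 <= r ->
  measurable_fun setT b1 -> measurable_fun setT b2 ->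
  (forall x, x \in `[a, c] -> 0 <= b1 x <= K1) ->
  (forall x, x \in `[a, c] -> 0 <= b2 x <= K2) ->
  0 <= mosc_prod_pow r b1 b2 a c <= K1 `^ r * K2 `^ r.
Proof.
move=> r0 mb1 mb2 b1K b2K.
exact: (avg_bound lt_ac (measurable_funM (measurable_osc mb1) (measurable_osc mb2))
  (osc_prod_bound r0 mb1 mb2 b1K b2K)).
Qed.

Lemma mosc_prod_powE {r b1 b2 K1 K2} : 0 <= r ->
  measurable_fun setT b1 -> measurable_fun setT b2 ->
  (forall x, x \in `[a, c] -> 0 <= b1 x <= K1) ->
  (forall x, x \in `[a, c] -> 0 <= b2 x <= K2) ->
  ((((c - a)^-1)%:E * \int[mu]_(x in `[a, c])
      ((`|b1 x - avg b1 a c| `^ r * `|b2 x - avg b2 a c| `^ r)%R)%:E) `^ r^-1)%E =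
  (mosc_prod_pow r b1 b2 a c `^ r^-1)%:E.
Proof.
move=> r0 mb1 mb2 b1K b2K.
by rewrite (avgE lt_ac (measurable_funM (measurable_osc mb1) (measurable_osc mb2))
  (osc_prod_bound r0 mb1 mb2 b1K b2K)) poweR_EFin.
Qed.

End mean_oscillation.

Section sqrt_abs_indic01.
Context {R : realType}.
Local Notation mu := (@lebesgue_measure R).
Implicit Types (a c u r x y : R).

Definition sqrt_abs x : R := Num.sqrt `|x|.
Definition indic01 : R -> R := \1_`[0, 1].

Lemma measurable_sqrt_abs : measurable_fun setT sqrt_abs.
Proof.
apply: measurableT_comp; last exact: normr_measurable.
exact: continuous_measurable_fun (@sqrt_continuous R).
Qed.

Lemma measurable_indic01 : measurable_fun setT indic01.
Proof. by apply: measurable_indic; exact: measurable_itv. Qed.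

Lemma indic01E x : indic01 x = if x \in `[0, 1] then 1 else 0.
Proof. by rewrite /indic01 indicE mem_setE; case: ifP. Qed.

Lemma indic01_bound x : 0 <= indic01 x <= 1.
Proof. by rewrite indic01E; case: ifP; rewrite ?lexx ?ler01. Qed.

Lemma indic01_itv a c x : x \in `[a, c] -> 0 <= indic01 x <= 1.
Proof. by move=> _; exact: indic01_bound. Qed.

Lemma sqrt_abs_ge0 x : 0 <= sqrt_abs x.
Proof. exact: sqrtr_ge0. Qed.

Lemma sqrt_abs_le x y : 0 <= y -> `|x| <= y ^+ 2 -> sqrt_abs x <= y.
Proof.
by move=> y0 xy; rewrite /sqrt_abs -[X in _ <= X](ger0_norm y0) -(sqrtr_sqr y) ler_sqrt ?sqr_ge0.
Qed.

Lemma sqrt_abs_ge x y : 0 <= y -> y ^+ 2 <= `|x| -> y <= sqrt_abs x.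
Proof.
by move=> y0 yx; rewrite /sqrt_abs -[X in X <= _](ger0_norm y0) -(sqrtr_sqr y) ler_sqrt.
Qed.

Lemma sqrt_abs_itv a c x : x \in `[a, c] ->
  0 <= sqrt_abs x <= Num.sqrt (`|a| + `|c|).
Proof.
rewrite in_itv /= sqrt_abs_ge0 => /andP[ax xc]; rewrite ler_sqrt ?addr_ge0 //.
have := normr_ge0 a; have := normr_ge0 c; have := ler_norm c.
have := ler_norm (- a); rewrite normrN.
by have [x0|x0] := lerP 0 x; rewrite ?(ger0_norm x0) ?(ltr0_norm x0); lra.
Qed.

Lemma Linfty_loc_sqrt_abs : Linfty_loc sqrt_abs.
Proof.
split=> [|a c]; first exact: measurable_sqrt_abs.
exists (Num.sqrt (`|a| + `|c|)); apply: aeW => x /sqrt_abs_itv.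
by rewrite (ger0_norm (sqrt_abs_ge0 x)) => /andP[].
Qed.

Lemma Linfty_loc_indic01 : Linfty_loc indic01.
Proof.
split=> [|a c]; first exact: measurable_indic01.
exists 1; apply: aeW => x _.
by have /andP[i0 i1] := indic01_bound x; rewrite ger0_norm.
Qed.

Lemma osc2_sqrt_abs_le {a c x} : a < c -> x \in `[a, c] ->
  `|sqrt_abs x - avg sqrt_abs a c| `^ 2 <= `|a| + `|c|.
Proof.
move=> ac /(osc_bound ac (ler0n R 2) measurable_sqrt_abs (@sqrt_abs_itv a c)).
by case/andP=> _ /le_trans; apply; rewrite powR_mulrn ?sqrtr_ge0 // sqr_sqrtr // addr_ge0.
Qed.

Lemma mosc_pow2_sqrt_abs_le {a c} : a < c -> mosc_pow 2 sqrt_abs a c <= `|a| + `|c|.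
Proof.
move=> ac; have oscM x : x \in `[a, c] ->
    0 <= `|sqrt_abs x - avg sqrt_abs a c| `^ 2 <= `|a| + `|c|.
  by move=> xI; rewrite powR_ge0 (osc2_sqrt_abs_le ac xI).
by case/andP: (avg_bound ac (measurable_osc measurable_sqrt_abs) oscM).
Qed.

Lemma osc2_indic01_le m x : 0 <= m <= 1 -> `|indic01 x - m| `^ 2 <= indic01 x + m ^+ 2.
Proof. by move=> /andP[m0 m1]; rewrite powR2_norm indic01E; case: ifP => _; nra. Qed.

Lemma avg_indic01_mul_le1 {a c} : a < c -> avg indic01 a c * (c - a) <= 1.
Proof.
move=> ac; rewrite /avg /indic01 integral_indic; [|exact: measurable_itv..].
rewrite mulrAC mulVf ?mul1r ?subr_eq0 ?gt_eqF //.
have le1 : (mu (`[0%R, 1%R] `&` `[a, c]) <= 1)%E.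
  rewrite (le_trans (measureIl _ _ _)) // -[X in (X <= _)%E]/(mu `[0%R, 1%R]).
  by rewrite lebesgue_measure_itv_cc ?subr0.
have fin : mu (`[0%R, 1%R] `&` `[a, c]) \is a fin_num.
  by rewrite ge0_fin_numE ?(le_lt_trans le1) ?ltry.
by rewrite -lee_fin (fineK fin).
Qed.

Lemma normD_mul_avg_indic01_le {a c} : a < c -> (`|a| + `|c|) * avg indic01 a c <= 4.
Proof.
move=> ac; have mh := avg_indic01_mul_le1 ac.
have /andP[m0 m1] := avg_bound ac measurable_indic01 (@indic01_itv _ _).
have [[x [+ +]] | no01] := pselect (exists x, x \in `[a, c] /\ x \in `[0, 1]).
  rewrite !in_itv /= => /andP[ax xc] /andP[x0 x1].
  have ha : `|a| <= 1 + (c - a) by rewrite ler_norml; apply/andP; split; lra.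
  have hc : `|c| <= 1 + (c - a) by rewrite ler_norml; apply/andP; split; lra.
  by nra.
have indic0 x : x \in `[a, c] -> 0 <= indic01 x <= 0.
  move=> xI; rewrite indic01E; case: ifP => [x01|]; rewrite ?lexx //.
  by case: no01; exists x.
have /andP[_ m_le0] := avg_bound ac measurable_indic01 indic0.
by rewrite (@le_anti _ _ (avg indic01 a c) 0) ?m0 ?m_le0 ?mulr0.
Qed.

Lemma normD_mul_avg_indic01_quad_le {a c} : a < c ->
  (`|a| + `|c|) * (avg indic01 a c + avg indic01 a c ^+ 2) <= 8.
Proof.
move=> ac; have := normD_mul_avg_indic01_le ac.
have := avg_bound ac measurable_indic01 (@indic01_itv _ _).
move: (avg indic01 a c) => m /andP[m0 m1] Mm.
have M0 : 0 <= `|a| + `|c| by rewrite addr_ge0.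
have -> : (`|a| + `|c|) * (m + m ^+ 2) = ((`|a| + `|c|) * m) * (1 + m) by ring.
have -> : 8 = 4 * 2 :> R by rewrite -natrM.
by apply: ler_pM; [exact: mulr_ge0 | lra | exact: Mm | lra].
Qed.

Lemma mosc_pow2_indic01_le {a c} : a < c ->
  mosc_pow 2 indic01 a c <= avg indic01 a c + avg indic01 a c ^+ 2.
Proof.
move=> ac; have i01 := @indic01_itv a c.
have m01 := avg_bound ac measurable_indic01 i01.
rewrite -[X in X + _]mul1r -(avg_affine ac ler01 (sqr_ge0 _) measurable_indic01 i01).
apply: (le_avg ac (1 + avg indic01 a c ^+ 2)).
- exact: measurable_osc measurable_indic01.
- exact: measurable_funD (measurable_funM (measurable_cst _) measurable_indic01) (measurable_cst _).
- by move=> x _; rewrite powR_ge0 mul1r osc2_indic01_le.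
- by move=> x _; rewrite mul1r lerD2r; case/andP: (indic01_bound x).
Qed.

Lemma mosc_prod_pow2_le {a c} : a < c ->
  mosc_prod_pow 2 sqrt_abs indic01 a c <=
  (`|a| + `|c|) * (avg indic01 a c + avg indic01 a c ^+ 2).
Proof.
move=> ac; have i01 := @indic01_itv a c.
have m01 := avg_bound ac measurable_indic01 i01.
have M0 : 0 <= `|a| + `|c| by rewrite addr_ge0.
rewrite mulrDr -(avg_affine ac M0 (mulr_ge0 M0 (sqr_ge0 _)) measurable_indic01 i01).
apply: (le_avg ac ((`|a| + `|c|) * (1 + avg indic01 a c ^+ 2))).
- exact: measurable_funM (measurable_osc measurable_sqrt_abs) (measurable_osc measurable_indic01).
- exact: measurable_funD (measurable_funM (measurable_cst _) measurable_indic01) (measurable_cst _).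
- move=> x xI; rewrite mulr_ge0 ?powR_ge0 //= -mulrDr.
  apply: ler_pM; [exact: powR_ge0 | exact: powR_ge0 | exact: osc2_sqrt_abs_le ac xI |].
  exact: osc2_indic01_le.
- move=> x _; rewrite -mulrDr ler_wpM2l // lerD2r.
  by case/andP: (indic01_bound x).
Qed.

Lemma mosc_mul2_le {a c} : a < c ->
  (mosc 2 sqrt_abs a c * mosc 2 indic01 a c <= (8 `^ 2^-1)%:E)%E.
Proof.
move=> ac; have r0 := ler0n R 2.
have /andP[p0 _] := mosc_pow_bound ac r0 measurable_sqrt_abs (@sqrt_abs_itv a c).
have /andP[q0 _] := mosc_pow_bound ac r0 measurable_indic01 (@indic01_itv _ _).
rewrite (moscE ac r0 measurable_sqrt_abs (@sqrt_abs_itv a c)).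
rewrite (moscE ac r0 measurable_indic01 (@indic01_itv _ _)).
rewrite -EFinM lee_fin -powRM //.
apply: ge0_ler_powR; rewrite ?nnegrE ?invr_ge0 ?(mulr_ge0 p0 q0) //.
apply: le_trans (normD_mul_avg_indic01_quad_le ac).
by apply: ler_pM; [exact: p0 | exact: q0 | exact: mosc_pow2_sqrt_abs_le | exact: mosc_pow2_indic01_le].
Qed.

Lemma mosc_prod2_le {a c} : a < c ->
  ((((c - a)^-1)%:E * \int[mu]_(x in `[a, c])
      ((`|sqrt_abs x - avg sqrt_abs a c| `^ 2 * `|indic01 x - avg indic01 a c| `^ 2)%R)%:E)
    `^ 2^-1 <= (8 `^ 2^-1)%:E)%E.
Proof.
move=> ac; have r0 := ler0n R 2; have i01 := @indic01_itv a c.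
rewrite (mosc_prod_powE ac r0 measurable_sqrt_abs measurable_indic01 (@sqrt_abs_itv a c) i01).
rewrite lee_fin; apply: ge0_ler_powR; rewrite ?nnegrE ?invr_ge0 //.
  by case/andP: (mosc_prod_pow_bound ac r0 measurable_sqrt_abs measurable_indic01 (@sqrt_abs_itv a c) i01).
exact: le_trans (mosc_prod_pow2_le ac) (normD_mul_avg_indic01_quad_le ac).
Qed.

Lemma avg_sqrt_abs_ge {u} : 0 < u -> 3 * u <= avg sqrt_abs 0 (64 * u ^+ 2).
Proof.
move=> u0; have u2 : 0 < u ^+ 2 by rewrite exprn_gt0.
have t0 : 0 < 64 * u ^+ 2 by rewrite mulr_gt0.
have b4 x : x \in `[16 * u ^+ 2, 64 * u ^+ 2] -> 4 * u <= sqrt_abs x.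
  rewrite in_itv /= => /andP[xl _]; apply: sqrt_abs_ge; first by rewrite mulr_ge0 // ltW.
  by rewrite exprMn (le_trans _ (ler_norm x)) //; lra.
have := avg_ge t0 _ _ _ _ measurable_sqrt_abs (@sqrt_abs_itv _ _) b4.
have -> : 4 * u * (64 * u ^+ 2 - 16 * u ^+ 2) / (64 * u ^+ 2 - 0) = 3 * u.
  by field; rewrite gt_eqF.
by apply; lra.
Qed.

Lemma avg_indic01_le_half {u} : 1 <= u -> avg indic01 0 (64 * u ^+ 2) <= 2^-1.
Proof.
move=> u1; have u2 : 1 <= u ^+ 2 by rewrite expr_ge1 // (le_trans ler01).
have t0 : 0 < 64 * u ^+ 2 by rewrite mulr_gt0 // (lt_le_trans ltr01).
have := avg_indic01_mul_le1 t0; rewrite subr0.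
have /andP[m0 _] := avg_bound t0 measurable_indic01 (@indic01_itv _ _).
by nra.
Qed.

Lemma osc_sqrt_abs_ge {u x} : 0 < u -> x \in `[0, u ^+ 2] ->
  2 * u <= `|sqrt_abs x - avg sqrt_abs 0 (64 * u ^+ 2)|.
Proof.
move=> u0; rewrite in_itv /= => /andP[x0 xu]; rewrite distrC (le_trans _ (ler_norm _)) //.
have := avg_sqrt_abs_ge u0.
have : sqrt_abs x <= u by apply: sqrt_abs_le; [exact: ltW | rewrite ger0_norm].
lra.
Qed.

Lemma osc_indic01_ge {u x} : 1 <= u -> x \in `[0, 1] ->
  2^-1 <= `|indic01 x - avg indic01 0 (64 * u ^+ 2)|.
Proof.
move=> u1 x01; have mh := avg_indic01_le_half u1.
by rewrite indic01E x01 (le_trans _ (ler_norm _)) //; lra.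
Qed.

Lemma mosc_pow_sqrt_abs_ge {r u} : 0 <= r -> 0 < u ->
  (2 * u) `^ r / 64 <= mosc_pow r sqrt_abs 0 (64 * u ^+ 2).
Proof.
move=> r0 u0; have u2 : 0 < u ^+ 2 by rewrite exprn_gt0.
have t0 : 0 < 64 * u ^+ 2 by rewrite mulr_gt0.
have := mosc_pow_ge t0 _ _ _ _ r0 measurable_sqrt_abs (@sqrt_abs_itv _ _)
  (fun x => osc_sqrt_abs_ge u0).
have -> : (2 * u) `^ r * (u ^+ 2 - 0) / (64 * u ^+ 2 - 0) = (2 * u) `^ r / 64.
  by field; rewrite gt_eqF.
by apply; lra.
Qed.

Lemma mosc_pow_indic01_ge {r u} : 0 <= r -> 1 <= u ->
  2^-1 `^ r / (64 * u ^+ 2) <= mosc_pow r indic01 0 (64 * u ^+ 2).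
Proof.
move=> r0 u1; have u2 : 1 <= u ^+ 2 by rewrite expr_ge1 // (le_trans ler01).
have t0 : 0 < 64 * u ^+ 2 by rewrite mulr_gt0 // (lt_le_trans ltr01).
have := mosc_pow_ge t0 _ _ _ _ r0 measurable_indic01 (@indic01_itv _ _)
  (fun x => osc_indic01_ge u1).
by rewrite !subr0 mulr1; apply; rewrite ?invr_ge0 //; lra.
Qed.

Lemma mosc_prod_pow_ge {r u} : 0 <= r -> 1 <= u ->
  u `^ r / (64 * u ^+ 2) <= mosc_prod_pow r sqrt_abs indic01 0 (64 * u ^+ 2).
Proof.
move=> r0 u1; have u0 : 0 < u by rewrite (lt_le_trans ltr01).
have u2 : 1 <= u ^+ 2 by rewrite expr_ge1 // ltW.
have t0 : 0 < 64 * u ^+ 2 by rewrite mulr_gt0 // (lt_le_trans ltr01).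
have u20 : 0 <= 2 * u by rewrite mulr_ge0 // ltW.
have far x : x \in `[0, 1] -> u `^ r <=
    `|sqrt_abs x - avg sqrt_abs 0 (64 * u ^+ 2)| `^ r *
    `|indic01 x - avg indic01 0 (64 * u ^+ 2)| `^ r.
  move=> x01; rewrite -(powR_mul2V (ltW u0)); apply: ler_pM; rewrite ?powR_ge0 //.
  - apply: ge0_ler_powR; rewrite ?nnegrE //.
    apply: osc_sqrt_abs_ge u0 _; move: x01; rewrite !in_itv /= => /andP[-> x1].
    exact: le_trans x1 u2.
  - by apply: ge0_ler_powR; rewrite ?nnegrE ?invr_ge0 ?(osc_indic01_ge u1 x01).
have := avg_ge t0 _ _ _ (powR_ge0 _ _)
  (measurable_funM (measurable_osc measurable_sqrt_abs) (measurable_osc measurable_indic01))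
  (osc_prod_bound t0 r0 measurable_sqrt_abs measurable_indic01 (@sqrt_abs_itv _ _)
    (@indic01_itv _ _)) far.
by rewrite !subr0 mulr1; apply; lra.
Qed.

Lemma mosc_mul_ge {r u} : 2 < r -> 1 <= u ->
  (((u `^ (r - 2) / 4096) `^ r^-1)%:E <=
    mosc r sqrt_abs 0 (64 * u ^+ 2) * mosc r indic01 0 (64 * u ^+ 2))%E.
Proof.
move=> r2 u1; have r0 : 0 <= r by lra.
have u0 : 0 < u by rewrite (lt_le_trans ltr01).
have t0 : 0 < 64 * u ^+ 2 by rewrite mulr_gt0 // exprn_gt0.
have i01 := @indic01_itv 0 (64 * u ^+ 2).
have /andP[p0 _] := mosc_pow_bound t0 r0 measurable_sqrt_abs (@sqrt_abs_itv _ _).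
have /andP[q0 _] := mosc_pow_bound t0 r0 measurable_indic01 i01.
rewrite (moscE t0 r0 measurable_sqrt_abs (@sqrt_abs_itv _ _)) (moscE t0 r0 measurable_indic01 i01).
rewrite -EFinM lee_fin -(powRM _ p0 q0).
apply: ge0_ler_powR.
- by rewrite invr_ge0.
- by rewrite nnegrE divr_ge0 ?powR_ge0 ?ler0n.
- by rewrite nnegrE (mulr_ge0 p0 q0).
have -> : u `^ (r - 2) / 4096 = (2 * u) `^ r / 64 * (2^-1 `^ r / (64 * u ^+ 2)).
  by rewrite (powR_sub2 u0) -(powR_mul2V (ltW u0)); field; rewrite gt_eqF.
apply: ler_pM.
- by rewrite divr_ge0 ?powR_ge0 ?ler0n.
- exact: divr_ge0 (powR_ge0 _ _) (mulr_ge0 (ler0n _ _) (sqr_ge0 _)).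
- exact: mosc_pow_sqrt_abs_ge.
- exact: mosc_pow_indic01_ge.
Qed.

Lemma mosc_prod_ge {r u} : 2 < r -> 1 <= u ->
  (((u `^ (r - 2) / 4096) `^ r^-1)%:E <=
   ((((64 * u ^+ 2 - 0)^-1)%R%:E * \int[mu]_(x in `[0%R, (64 * u ^+ 2)%R])
      ((`|sqrt_abs x - avg sqrt_abs 0 (64 * u ^+ 2)| `^ r *
        `|indic01 x - avg indic01 0 (64 * u ^+ 2)| `^ r)%R)%:E) `^ r^-1))%E.
Proof.
move=> r2 u1; have r0 : 0 <= r by lra.
have u0 : 0 < u by rewrite (lt_le_trans ltr01).
have t0 : 0 < 64 * u ^+ 2 by rewrite mulr_gt0 // exprn_gt0.
rewrite (mosc_prod_powE t0 r0 measurable_sqrt_abs measurable_indic01 (@sqrt_abs_itv _ _)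
  (@indic01_itv _ _)) lee_fin.
have x0 : 0 <= u `^ (r - 2) / 4096 by rewrite divr_ge0 ?powR_ge0 ?ler0n.
have lb : u `^ (r - 2) / 4096 <= mosc_prod_pow r sqrt_abs indic01 0 (64 * u ^+ 2).
  apply: le_trans (mosc_prod_pow_ge r0 u1).
  have -> : u `^ r / (64 * u ^+ 2) = 64 * (u `^ (r - 2) / 4096).
    by rewrite (powR_sub2 u0); field; rewrite gt_eqF.
  lra.
by apply: ge0_ler_powR; rewrite ?nnegrE ?invr_ge0 ?x0 ?(le_trans x0 lb).
Qed.

End sqrt_abs_indic01.

Theorem corollary4p6 (R : realType) :
  exists b1 b2 : R -> R,
    [/\ Linfty_loc b1, Linfty_loc b2,
        (S_ 2 b1 b2 < +oo)%E, (T_ 2 b1 b2 < +oo)%E &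
        forall eps : R, 0 < eps ->
          S_ (2 + eps) b1 b2 = +oo%E /\ T_ (2 + eps) b1 b2 = +oo%E].
Proof.
exists sqrt_abs, indic01; split.
- exact: Linfty_loc_sqrt_abs.
- exact: Linfty_loc_indic01.
- apply: le_lt_trans (ltry (8 `^ 2^-1)).
  by apply: ge_ereal_sup => _ [a [c [ac ->]]]; exact: mosc_mul2_le.
- apply: le_lt_trans (ltry (8 `^ 2^-1)).
  by apply: ge_ereal_sup => _ [a [c [ac ->]]]; exact: mosc_prod2_le.
move=> eps eps0; have r2 : 2 < 2 + eps by rewrite ltrDl.
have C0 : (0 : R) < 4096 by rewrite ltr0n.
split; apply/eq_infty => M; have [u u1 Mu] := powR_sub2_unbounded M r2 C0;
  have t0 : 0 < 64 * u ^+ 2 by rewrite mulr_gt0 // exprn_gt0 // (lt_le_trans ltr01).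
- apply: le_trans (ereal_sup_ubound _); last by exists 0, (64 * u ^+ 2).
  by apply: le_trans (mosc_mul_ge r2 u1); rewrite lee_fin.
- apply: le_trans (ereal_sup_ubound _); last by exists 0, (64 * u ^+ 2).
  by apply: le_trans (mosc_prod_ge r2 u1); rewrite lee_fin.
Qed.
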